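(* Let $\mathbf{T}$ be a totally ordered set and $\Bbbk$ a field. The assignment $F\mapsto\mathcal{B}_F$, sending a homomorphism $F$ of pointwise finite-dimensional $\mathbf{T}$-persistence modules to the barcode of its image, defines a functor from the category of factorizations $\mathrm{Fact}(\mathbf{vec}^{\mathbf{T}})$ to the poset $\mathbf{SBar}_{\mathbf{T}}$. Equivalently: whenever $F:\mathbb{U}\to\mathbb{V}$ and $G:\mathbb{T}'\to\mathbb{W}$ are homomorphisms of pointwise finite-dimensional $\mathbf{T}$-persistence modules and there exist homomorphisms $\varphi_1:\mathbb{T}'\to\mathbb{U}$ and $\varphi_2:\mathbb{V}\to\mathbb{W}$ with $G=\varphi_2\circ F\circ\varphi_1$, we have $\mathcal{B}_G\sqsubseteq\mathcal{B}_F$.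
   Context: A $\mathbf{T}$-persistence module over a field $\Bbbk$ is a functor $\mathbb{V}:\mathbf{T}\to\mathbf{Vec}_\Bbbk$; homomorphisms are natural transformations; it is pointwise finite-dimensional (p.f.d.) if each $\mathbb{V}(t)$ is finite-dimensional; $\mathbf{vec}^{\mathbf{T}}$ denotes the category of p.f.d. $\mathbf{T}$-modules. An interval in $\mathbf{T}$ is a nonempty convex subset; $\mathcal{I}_{\mathbf{T}}$ is the set of intervals. A $\mathbf{T}$-indexed barcode is a function $\mathcal{B}:\mathrm{Rep}(\mathcal{B})\to\mathcal{I}_{\mathbf{T}}$ from a set of bars. Every p.f.d. $\mathbf{T}$-module $\mathbb{V}$ is isomorphic to $\bigoplus_{\beta\in\mathrm{Rep}(\mathcal{B}_\mathbb{V})}\Bbbk_{\mathcal{B}_\mathbb{V}(\beta)}$ for a barcode $\mathcal{B}_\mathbb{V}$, unique up to bijection of bars, where $\Bbbk_I$ is the interval module ($\Bbbk$ on $I$, $0$ elsewhere, identity maps within $I$). For a homomorphism $F$, $\mathcal{B}_F:=\mathcal{B}_{\mathrm{im}\,F}$. A matching $M\subseteq\mathrm{Rep}(\mathcal{A})\times\mathrm{Rep}(\mathcal{B})$ relates each element to at most one other element; it is injective if every $\alpha\in\mathrm{Rep}(\mathcal{A})$ is matched. It is a sub-barcode matching if $\mathcal{A}(\alpha)\subseteq\mathcal{B}(\beta)$ for all $(\alpha,\beta)\in M$. We write $\mathcal{A}\sqsubseteq\mathcal{B}$ ($\mathcal{A}$ is a sub-barcode of $\mathcal{B}$) if there is an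 injective sub-barcode matching from $\mathcal{A}$ to $\mathcal{B}$. $\mathbf{SBar}_{\mathbf{T}}$ is the poset of isomorphism classes of $\mathbf{T}$-indexed barcodes ordered by $\sqsubseteq$. The category of factorizations $\mathrm{Fact}(\mathbf{C})$ has as objects the morphisms of $\mathbf{C}$, and an arrow $G\rightleftharpoons F$ from $G:a\to d$ to $F:b\to c$ is a pair $(\varphi_1:a\to b,\varphi_2:c\to d)$ with $G=\varphi_2\circ F\circ\varphi_1$. *)

From HB Require Import structures.
From mathcomp Require Import all_boot all_order all_algebra.
Set Implicit Arguments. Unset Strict Implicit. Unset Printing Implicit Defensive.
Import Order.TTheory GRing.Theory.
Local Open Scope order_scope.

Section PersistenceDefs.
Variables (K : fieldType) (d : Order.disp_t) (T : orderType d).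

(* Each V t is a finite-dimensional K-vector space (vectType K); the structure
   maps pmap s t are only meaningful (and constrained) for s <= t. *)
Record pmod := PMod {
  pV :> T -> vectType K;
  pmap : forall s t : T, 'Hom(pV s, pV t);
  pmap_id : forall (t : T) (x : pV t), pmap t t x = x;
  pmap_comp : forall (r s t : T) (x : pV r), r <= s -> s <= t ->
      pmap r t x = pmap s t (pmap r s x)
}.

Record pmhom (V W : pmod) := PMHom {
  hcomp :> forall t : T, 'Hom(V t, W t);
  hnat : forall (s t : T) (x : V s), s <= t ->
      hcomp t (pmap V s t x) = pmap W s t (hcomp s x)
}.

Definition is_interval (I : pred T) : Prop :=
  (exists t, I t) /\ (forall r s t : T, r <= s -> s <= t -> I r -> I t -> I s).

Record barcode := Barcode {
  rep : Type;
  bar : rep -> pred T;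
  bar_interval : forall b, is_interval (bar b)
}.

Definition matching (A B : barcode) (M : rep A -> rep B -> Prop) : Prop :=
  (forall a b b', M a b -> M a b' -> b = b') /\
  (forall a a' b, M a b -> M a' b -> a = a').

Definition subbarcode (A B : barcode) : Prop :=
  exists M : rep A -> rep B -> Prop,
    [/\ matching M,
        (forall a, exists b, M a b) &
        (forall a b, M a b -> forall t, bar a t -> bar b t)].

(* B is a barcode of im F, i.e. im F is isomorphic to the direct sum of the
   interval modules k_{B(beta)}.  Written out: v beta t is the image of the
   generator of the beta-th summand at index t (t in B beta) under such an
   isomorphism; at each t the vectors v beta t with t in B beta are finitely
   many and form a basis of im F(t) = limg (F t), and the structure maps of
   W (restricted to im F) act on them as the interval modules' maps do. *)
Definition barcode_of_image (V W : pmod) (F : pmhom V W) (B : barcode) : Prop :=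
  exists v : rep B -> forall t : T, W t,
    (forall t : T, exists n (e : 'I_n -> rep B),
        [/\ injective e,
            (forall i, bar (e i) t),
            (forall b, bar b t -> exists i, e i = b) &
            basis_of (limg (F t)) [seq v (e i) t | i <- enum 'I_n]]) /\
    (forall (b : rep B) (s t : T), s <= t -> bar b s ->
        pmap W s t (v b s) = if bar b t then v b t else 0%R).

End PersistenceDefs.

(* On a finite chain p_0 <= ... <= p_(n-1) of T the bars of a barcode become
   intervals [s, e] of indices, and the number of bars of B_F containing
   [p_i, p_j] is the rank of the structure map of im F from p_i to p_j.
   Z := im (F \o phi1) is a submodule of im F and im G = phi2 Z is a quotient
   of Z.  The resulting rank inequalities let a greedy matching send each bar
   of B_G to a bar of Z with the same left end, and each bar of Z to a bar of
   B_F with the same right end.  Z has no barcode of its own; on the chain it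
   is rebuilt from its rank function by Moebius inversion.  Running the chain
   through finitely many test points makes containment along the chain imply
   containment in T, and Tychonoff's theorem for a product of finite discrete
   spaces glues the matchings found for finite sets of bars of B_G into one
   injective sub-barcode matching. *)

From Stdlib Require List.
From Pilot Require Import Defs.
From mathcomp Require Import all_boot all_order all_algebra.
From mathcomp Require Import zify boolp.
From mathcomp Require finmap classical_sets cardinality topology.
Import Order.TTheory.

Set Implicit Arguments.
Unset Strict Implicit.
Unset Printing Implicit Defensive.

Section GreedyMatching.
Variables (A B : finType) (colA : A -> nat) (colB : B -> nat).
Variables (keyA : A -> nat) (keyB : B -> nat).

Definition class_le_key (X : finType) (S : {set X}) (col key : X -> nat) c k :=
  [set x in S | (col x == c) && (key x <= k)].

Definition class_dominated (SA : {set A}) (SB : {set B}) :=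
  forall c k, #|class_le_key SA colA keyA c k| <= #|class_le_key SB colB keyB c k|.

Lemma class_dominated_remove (SA : {set A}) (SB : {set B}) am bm :
  class_dominated SA SB -> am \in SA -> {in SA, forall a, keyA a <= keyA am} ->
  bm \in class_le_key SB colB keyB (colA am) (keyA am) ->
  {in class_le_key SB colB keyB (colA am) (keyA am), forall b, keyB b <= keyB bm} ->
  class_dominated (SA :\ am) (SB :\ bm).
Proof.
move=> dom amA amM bmC bmM c k.
set CA := class_le_key SA colA keyA; set CB := class_le_key SB colB keyB.
have -> : class_le_key (SA :\ am) colA keyA c k = CA c k :\ am.
  by apply/setP => x; rewrite !inE -andbA.
have -> : class_le_key (SB :\ bm) colB keyB c k = CB c k :\ bm.
  by apply/setP => x; rewrite !inE -andbA.
have dom_ck : #|CA c k| <= #|CB c k| := dom c k.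
have := cardsD1 am (CA c k); have := cardsD1 bm (CB c k).
case: (boolP (am \in CA c k)) => amC; case: (boolP (bm \in CB c k)) => bmCk /=; try lia.
move: bmC; rewrite inE => /and3P [bmB /eqP bmc bmk].
have [c_am bmk'] : c = colA am /\ keyB bm <= k.
  by move: bmCk; rewrite inE bmc => /and3P [_ /eqP -> ->].
subst c.
have lt_k : k < keyA am by move: amC; rewrite inE amA eqxx -ltnNge.
have sameB : CB (colA am) k = CB (colA am) (keyA am).
  apply/setP => x; rewrite !inE; apply/and3P/and3P => -[xB xc xk]; split=> //.
    exact: leq_trans xk (ltnW lt_k).
  by apply: leq_trans bmk'; apply: bmM; rewrite inE xB xc.
have subA : CA (colA am) k \subset CA (colA am) (keyA am) :\ am.
  apply/subsetP => x; rewrite !inE => /and3P [xA -> xk].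
  rewrite xA (leq_trans xk (ltnW lt_k)) !andbT.
  by apply: contraTneq xk => ->; rewrite -ltnNge.
have dom_am : #|CA (colA am) (keyA am)| <= #|CB (colA am) k| by rewrite sameB; apply: dom.
have amK : am \in CA (colA am) (keyA am) by rewrite inE amA eqxx leqnn.
have := subset_leq_card subA; have := cardsD1 am (CA (colA am) (keyA am)); rewrite amK; lia.
Qed.

Lemma greedy_matching (SA : {set A}) (SB : {set B}) : class_dominated SA SB ->
  exists h : A -> option B, {in SA &, injective h} /\
    forall a, a \in SA -> exists2 b, h a = Some b &
      [/\ b \in SB, colB b = colA a & keyB b <= keyA a].
Proof.
move: {2}#|SA| (leqnn #|SA|) => m; elim: m SA SB => [|m IH] SA SB.
  rewrite leqn0 cards_eq0 => /eqP -> _.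
  by exists (fun=> None); split=> [a|a]; rewrite inE.
move=> szA dom.
have [-> | [a0 a0A]] := set_0Vmem SA.
  by exists (fun=> None); split=> [a|a]; rewrite inE.
have [am amA amM] : exists2 am, am \in SA & {in SA, forall a, keyA a <= keyA am}.
  by case: (arg_maxnP keyA a0A) => am ? ?; exists am.
set C := class_le_key SB colB keyB (colA am) (keyA am).
have [b1 b1C] : exists b, b \in C.
  apply/card_gt0P; apply: leq_trans (dom _ _); apply/card_gt0P.
  by exists am; rewrite inE amA eqxx leqnn.
have [bm bmC bmM] : exists2 bm, bm \in C & {in C, forall b, keyB b <= keyB bm}.
  by case: (arg_maxnP keyB b1C) => bm ? ?; exists bm.
have [||h [h_inj h_match]] := IH (SA :\ am) (SB :\ bm).
- by move: szA; rewrite (cardsD1 am) amA add1n ltnS.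
- exact: class_dominated_remove.
move: bmC; rewrite inE => /and3P [bmB /eqP bmc bmk].
exists (fun a => if a == am then Some bm else h a); split; last first.
  move=> a aA; case: eqP => [->|/eqP ne]; first by exists bm.
  have [|b hb [bB ? ?]] := h_match a; first by rewrite !inE ne.
  by exists b => //; split=> //; move: bB; rewrite inE => /andP [].
have hne a : a \in SA :\ am -> h a != Some bm.
  move=> aA; have [b -> [+ _ _]] := h_match a aA.
  by rewrite !inE => /andP [+ _]; apply: contraNneq => -[->].
move=> a a' aA a'A; case: eqP => [->|/eqP ne]; case: eqP => [->|/eqP ne'] //.
- by move=> hbm; have := hne a'; rewrite !inE ne' a'A -hbm eqxx => /(_ isT).
- by move=> hbm; have := hne a; rewrite !inE ne aA hbm eqxx => /(_ isT).
- by apply: h_inj; rewrite !inE ?ne ?ne' ?aA ?a'A.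
Qed.

End GreedyMatching.

Definition rank_count (X : finType) (S : {set X}) (s e : X -> nat) i j :=
  #|[set x in S | (s x < i) && (j <= e x)]|.

Lemma rank_count0 (X : finType) (S : {set X}) (s e : X -> nat) j :
  rank_count S s e 0 j = 0.
Proof. by apply/eqP; rewrite cards_eq0; apply/eqP/setP => x; rewrite !inE ltn0 andbF. Qed.

Lemma rank_count_out (X : finType) (S : {set X}) (s e : X -> nat) i n :
  {in S, forall x, e x < n} -> rank_count S s e i n = 0.
Proof.
move=> e_lt; apply/eqP; rewrite cards_eq0; apply/eqP/setP => x; rewrite !inE.
by case: (boolP (x \in S)) => //= /e_lt; rewrite ltnNge => /negbTE ->; rewrite andbF.
Qed.

Section CardSplit.
Variables (X : finType) (S : {set X}) (f : X -> nat) (P : pred X).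

Lemma cards_ltnS i : #|[set x in S | (f x < i.+1) && P x]| =
  #|[set x in S | (f x == i) && P x]| + #|[set x in S | (f x < i) && P x]|.
Proof.
rewrite -(cardsID [set x | f x == i]); congr (_ + _); apply: eq_card => x;
  by rewrite !inE; lia.
Qed.

Lemma cards_leqS j : #|[set x in S | P x && (j <= f x)]| =
  #|[set x in S | P x && (f x == j)]| + #|[set x in S | P x && (j < f x)]|.
Proof.
rewrite -(cardsID [set x | f x == j]); congr (_ + _); apply: eq_card => x;
  by rewrite !inE; lia.
Qed.

End CardSplit.

Section VirtualBarcode.
Variables (n : nat) (R : nat -> nat -> nat).
Hypothesis R0 : forall j, R 0 j = 0.
Hypothesis Rn : forall i, R i n = 0.
Hypothesis R_moebius : forall i j, i <= j < n -> R i j + R i.+1 j.+1 <= R i.+1 j + R i j.+1.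

(* [R i j] stands for the number of bars [s, e] with [s < i] and [j <= e], so
   [moebius i j] is the number of bars equal to [i, j]; [R_moebius] says that
   the truncated subtraction is exact. *)
Definition moebius i j := R i.+1 j + R i j.+1 - (R i j + R i.+1 j.+1).

Let Z := {ij : 'I_n * 'I_n & 'I_(moebius ij.1 ij.2)}.
Let sZ (z : Z) : nat := (tag z).1.
Let eZ (z : Z) : nat := (tag z).2.
Let SZ := [set z : Z | sZ z <= eZ z].

Lemma virtual_class c j : c <= j < n ->
  #|[set z in SZ | (sZ z == c) && (eZ z == j)]| = moebius c j.
Proof.
case/andP=> cj jn; have cn := leq_ltn_trans cj jn.
have -> : [set z in SZ | (sZ z == c) && (eZ z == j)] =
          Tagged _ (i := (Ordinal cn, Ordinal jn)) @: [set: 'I_(moebius c j)].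
  apply/setP => z; rewrite !inE /sZ /eZ; apply/idP/imsetP => [|[k _ ->] /=]; last first.
    by rewrite cj !eqxx.
  case: z => -[c' j'] /= + /and3P [_ /eqP ec /eqP ej].
  have -> : c' = Ordinal cn by apply: val_inj.
  have -> : j' = Ordinal jn by apply: val_inj.
  by move=> k; exists k; rewrite ?in_setT.
by rewrite card_imset ?cardsT ?card_ord //; apply: eq_from_Tagged.
Qed.

Lemma virtual_row c j : c <= j <= n ->
  #|[set z in SZ | (sZ z == c) && (j <= eZ z)]| + R c j = R c.+1 j.
Proof.
case/andP=> cj /subnK; move: (n - j) => k; elim: k j cj => [|k IH] j cj jk.
  rewrite add0n in jk; subst j; rewrite !Rn addn0; apply/eqP; rewrite cards_eq0.
  by apply/eqP/setP => z; rewrite !inE /eZ [n <= _]leqNgt ltn_ord !andbF.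
have jn : j < n by rewrite -jk addSn ltnS leq_addl.
rewrite cards_leqS virtual_class ?cj ?jn //.
have := IH j.+1 (leqW cj) (etrans (esym (addSnnS k j)) jk).
have := R_moebius (i := c) (j := j); rewrite /moebius cj jn; lia.
Qed.

Lemma virtual_rank_count i j : i <= j.+1 -> j <= n -> rank_count SZ sZ eZ i j = R i j.
Proof.
elim: i => [|i IH] ij jn; first by rewrite R0 rank_count0.
by rewrite /rank_count cards_ltnS -/(rank_count _ _ _ i j) IH ?virtual_row //; lia.
Qed.

Lemma virtual_barcode : exists (Z : finType) (SZ : {set Z}) (sZ eZ : Z -> nat),
  {in SZ, forall z, sZ z <= eZ z < n} /\
  forall i j, i <= j.+1 -> j <= n -> rank_count SZ sZ eZ i j = R i j.
Proof.
exists Z, SZ, sZ, eZ; split; last exact: virtual_rank_count.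
by move=> z; rewrite inE /eZ ltn_ord andbT.
Qed.

End VirtualBarcode.

Section IntervalMatching.
Variables (n : nat) (A B : finType) (SA : {set A}) (SB : {set B}).
Variables (sA eA : A -> nat) (sB eB : B -> nat).
Hypothesis A_in : {in SA, forall a, sA a <= eA a < n}.
Hypothesis B_in : {in SB, forall b, sB b <= eB b < n}.

Lemma match_same_start :
  (forall i j, i <= j < n -> #|[set a in SA | (sA a == i) && (j <= eA a)]|
                           <= #|[set b in SB | (sB b == i) && (j <= eB b)]|) ->
  exists h : A -> option B, {in SA &, injective h} /\
    forall a, a \in SA -> exists2 b, h a = Some b &
      [/\ b \in SB, sB b = sA a & eA a <= eB b].
Proof.
move=> dom; have [|h [h_inj h_match]] := greedy_matching (keyA := fun a => n - eA a)
    (keyB := fun b => n - eB b) (SA := SA) (SB := SB) (colA := sA) (colB := sB).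
  move=> c k; rewrite /class_le_key; have [jn|nj] := ltnP (maxn c (n - k)) n.
    have -> : [set a in SA | (sA a == c) && (n - eA a <= k)] =
              [set a in SA | (sA a == c) && (maxn c (n - k) <= eA a)].
      by apply/setP => a; rewrite !inE; case: (boolP (a \in SA)) => //= /A_in; lia.
    have -> : [set b in SB | (sB b == c) && (n - eB b <= k)] =
              [set b in SB | (sB b == c) && (maxn c (n - k) <= eB b)].
      by apply/setP => b; rewrite !inE; case: (boolP (b \in SB)) => //= /B_in; lia.
    by apply: dom; lia.
  suff -> : [set a in SA | (sA a == c) && (n - eA a <= k)] = set0 by rewrite cards0.
  by apply/setP => a; rewrite !inE; case: (boolP (a \in SA)) => //= /A_in; lia.
exists h; split=> // a aS; have [b hb [bS sb eb]] := h_match a aS.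
by exists b => //; split=> //; have := A_in aS; have := B_in bS; lia.
Qed.

Lemma match_same_end :
  (forall i j, i <= j < n -> #|[set a in SA | (sA a < i.+1) && (eA a == j)]|
                           <= #|[set b in SB | (sB b < i.+1) && (eB b == j)]|) ->
  exists h : A -> option B, {in SA &, injective h} /\
    forall a, a \in SA -> exists2 b, h a = Some b &
      [/\ b \in SB, sB b <= sA a & eB b = eA a].
Proof.
move=> dom; have [|h [h_inj h_match]] := greedy_matching (keyA := sA) (keyB := sB)
    (SA := SA) (SB := SB) (colA := eA) (colB := eB).
  move=> c k; rewrite /class_le_key; have [cn|nc] := ltnP c n.
    have -> : [set a in SA | (eA a == c) && (sA a <= k)] =
              [set a in SA | (sA a < (minn k c).+1) && (eA a == c)].
      by apply/setP => a; rewrite !inE; case: (boolP (a \in SA)) => //= /A_in; lia.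
    have -> : [set b in SB | (eB b == c) && (sB b <= k)] =
              [set b in SB | (sB b < (minn k c).+1) && (eB b == c)].
      by apply/setP => b; rewrite !inE; case: (boolP (b \in SB)) => //= /B_in; lia.
    by apply: dom; lia.
  suff -> : [set a in SA | (eA a == c) && (sA a <= k)] = set0 by rewrite cards0.
  by apply/setP => a; rewrite !inE; case: (boolP (a \in SA)) => //= /A_in; lia.
by exists h; split=> // a aS; have [b hb [bS eb sb]] := h_match a aS; exists b.
Qed.

End IntervalMatching.

Section RankMatching.
Variables (n : nat) (A B : finType) (SA : {set A}) (SB : {set B}).
Variables (sA eA : A -> nat) (sB eB : B -> nat) (R : nat -> nat -> nat).
Hypothesis A_in : {in SA, forall a, sA a <= eA a < n}.
Hypothesis B_in : {in SB, forall b, sB b <= eB b < n}.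
Hypothesis R0 : forall j, R 0 j = 0.
Hypothesis Rn : forall i, R i n = 0.
Hypothesis R_moebius : forall i j, i <= j < n -> R i j + R i.+1 j.+1 <= R i.+1 j + R i j.+1.
Hypothesis quotient_rank : forall i j, i <= j < n ->
  rank_count SA sA eA i.+1 j + R i j <= R i.+1 j + rank_count SA sA eA i j.
Hypothesis sub_rank : forall i j, i <= j < n ->
  R i.+1 j + rank_count SB sB eB i.+1 j.+1 <= rank_count SB sB eB i.+1 j + R i.+1 j.+1.

Theorem rank_matching : exists h : A -> option B, {in SA &, injective h} /\
  forall a, a \in SA -> exists2 b, h a = Some b &
    [/\ b \in SB, sB b <= sA a & eA a <= eB b].
Proof.
have [Z [SZ [sZ [eZ [Z_in Z_rank]]]]] := virtual_barcode R0 Rn R_moebius.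
have [|h1 [h1_inj h1_match]] := match_same_start A_in Z_in.
  move=> i j ij; have := quotient_rank ij; by rewrite -!Z_rank /rank_count ?cards_ltnS; lia.
have [|h2 [h2_inj h2_match]] := match_same_end Z_in B_in.
  move=> i j ij; have := sub_rank ij; rewrite -!Z_rank /rank_count;
    rewrite ?(cards_leqS SZ eZ _ j) ?(cards_leqS SB eB _ j); lia.
exists (fun a => obind h2 (h1 a)); split.
  move=> a a' aS a'S; have [z hz [zS _ _]] := h1_match a aS.
  have [z' hz' [z'S _ _]] := h1_match a' a'S.
  rewrite hz hz' /= => /(h2_inj _ _ zS z'S) eq_z.
  by apply: h1_inj; rewrite // hz hz' eq_z.
move=> a aS; have [z -> [zS sz ez]] := h1_match a aS.
have [b hb [bS sb eb]] := h2_match z zS.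
by exists b => //; split=> //; lia.
Qed.

End RankMatching.

Section DimImage.
Variables (K : fieldType) (vT wT : vectType K) (f : 'Hom(vT, wT)).

Lemma dim_limg_le (U : {vspace vT}) : \dim (f @: U) <= \dim U.
Proof. by rewrite -(limg_ker_dim f U) leq_addl. Qed.

Lemma dim_limg_subv (U U' : {vspace vT}) : (U' <= U)%VS ->
  \dim (f @: U) + \dim U' <= \dim U + \dim (f @: U').
Proof.
move=> sU'U; have := limg_ker_dim f U; have := limg_ker_dim f U'.
have : \dim (U' :&: lker f) <= \dim (U :&: lker f) by apply/dimvS/capvS.
lia.
Qed.

End DimImage.

Section ImageRank.
Variables (K : fieldType) (d : Order.disp_t) (T : orderType d).

Definition pmhom_comp (X Y Z : pmod K T) (g : pmhom Y Z) (f : pmhom X Y) : pmhom X Z.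
Proof.
exists (fun t => g t \o f t)%VF => s t x st.
by rewrite !comp_lfunE hnat // hnat.
Defined.

Definition img_rank (X V : pmod K T) (H : pmhom X V) (s t : T) :=
  \dim (Defs.pmap V s t @: limg (H s)).

Lemma img_pmap_comp (X V : pmod K T) (H : pmhom X V) s t u : (s <= t)%O -> (t <= u)%O ->
  (Defs.pmap V s u @: limg (H s) = Defs.pmap V t u @: (Defs.pmap V s t @: limg (H s)))%VS.
Proof.
move=> st tu; rewrite -[RHS]limg_comp; apply: eq_in_limg => x _.
by rewrite comp_lfunE (pmap_comp _ st).
Qed.

Section Rank.
Variables (X V : pmod K T) (H : pmhom X V).

Lemma img_pmap_sub r s t : (r <= s)%O -> (s <= t)%O ->
  (Defs.pmap V r t @: limg (H r) <= Defs.pmap V s t @: limg (H s))%VS.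
Proof.
move=> rs st; rewrite (img_pmap_comp H rs st) limgS // -limg_comp.
apply/subvP => _ /memv_imgP [x _ ->]; rewrite comp_lfunE -hnat //.
exact: memv_img (memvf _).
Qed.

Lemma img_rank_leq_start r s t : (r <= s)%O -> (s <= t)%O -> img_rank H r t <= img_rank H s t.
Proof. by move=> rs st; apply/dimvS/img_pmap_sub. Qed.

Lemma img_rank_leq_end s t u : (s <= t)%O -> (t <= u)%O -> img_rank H s u <= img_rank H s t.
Proof. by move=> st tu; rewrite /img_rank (img_pmap_comp H st tu) dim_limg_le. Qed.

Lemma img_rank_moebius r s t u : (r <= s)%O -> (s <= t)%O -> (t <= u)%O ->
  img_rank H r t + img_rank H s u <= img_rank H s t + img_rank H r u.
Proof.
move=> rs st tu; have rt := le_trans rs st.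
rewrite /img_rank (img_pmap_comp H st tu) (img_pmap_comp H rt tu) addnC.
exact/dim_limg_subv/img_pmap_sub.
Qed.

Variable (Y : pmod K T) (phi : pmhom Y X).

Lemma img_comp_sub s t :
  (Defs.pmap V s t @: limg (pmhom_comp H phi s) <= Defs.pmap V s t @: limg (H s))%VS.
Proof. by apply/limgS; rewrite /= limg_comp limgS ?subvf. Qed.

Lemma img_rank_comp_leq s t : img_rank (pmhom_comp H phi) s t <= img_rank H s t.
Proof. exact/dimvS/img_comp_sub. Qed.

Lemma img_rank_comp s t u : (s <= t)%O -> (t <= u)%O ->
  img_rank (pmhom_comp H phi) s t + img_rank H s u <=
  img_rank H s t + img_rank (pmhom_comp H phi) s u.
Proof.
move=> st tu; rewrite /img_rank !(img_pmap_comp _ st tu) addnC.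
exact/dim_limg_subv/img_comp_sub.
Qed.

Variables (W : pmod K T) (G : pmhom X W) (psi : pmhom V W).
Hypothesis G_psiH : forall t x, G t x = psi t (H t x).

Lemma img_pmap_quotient s t : (s <= t)%O ->
  (Defs.pmap W s t @: limg (G s) = psi t @: (Defs.pmap V s t @: limg (H s)))%VS.
Proof.
move=> st; rewrite -!limg_comp; apply: eq_in_limg => x _.
by rewrite !comp_lfunE G_psiH hnat.
Qed.

Lemma img_rank_quotient_leq s t : (s <= t)%O -> img_rank G s t <= img_rank H s t.
Proof. by move=> st; rewrite /img_rank img_pmap_quotient ?dim_limg_le. Qed.

Lemma img_rank_quotient r s t : (r <= s)%O -> (s <= t)%O ->
  img_rank G s t + img_rank H r t <= img_rank H s t + img_rank G r t.
Proof.
move=> rs st; rewrite /img_rank !img_pmap_quotient ?(le_trans rs st) //.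
exact/dim_limg_subv/img_pmap_sub.
Qed.

End Rank.

End ImageRank.

Section BarcodeRank.
Variables (K : fieldType) (d : Order.disp_t) (T : orderType d).
Variables (V W : pmod K T) (F : pmhom V W) (B : barcode T).

Section Basis.
Variables (v : rep B -> forall t, W t) (N : T -> nat) (e : forall t, 'I_(N t) -> rep B).
Arguments e : clear implicits.
Hypothesis e_surj : forall t b, bar b t -> exists i, e t i = b.
Hypothesis e_bar : forall t i, bar (e t i) t.
Hypothesis e_basis : forall t, basis_of (limg (F t)) [seq v (e t i) t | i <- enum 'I_(N t)].
Hypothesis v_pmap : forall b s t, (s <= t)%O -> bar b s ->
  Defs.pmap W s t (v b s) = if bar b t then v b t else 0%R.

Lemma dim_span_basis_sub t (P : pred 'I_(N t)) :
  \dim <<[seq v (e t i) t | i <- enum 'I_(N t) & P i]>> = #|[set i | P i]|.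
Proof.
have free_all := basis_free (e_basis t).
have /subseq_uniqP sub : subseq [seq v (e t i) t | i <- enum 'I_(N t) & P i]
                                [seq v (e t i) t | i <- enum 'I_(N t)].
  exact/map_subseq/filter_subseq.
rewrite (free_uniq free_all) in sub.
have /eqP -> : free [seq v (e t i) t | i <- enum 'I_(N t) & P i].
  by rewrite (sub erefl) filter_free.
by rewrite size_map size_filter cardsE cardE -size_filter {2}/enum_mem -enumT.
Qed.

Lemma img_pmap_span s t : (s <= t)%O ->
  (Defs.pmap W s t @: limg (F s) =
   <<[seq v (e t i) t | i <- enum 'I_(N t) & bar (e t i) s]>>)%VS.
Proof.
move=> st; rewrite -(span_basis (e_basis s)) limg_span -map_comp.
apply/subv_anti/andP; split; apply/span_subvP => x /mapP [i].
- move=> _ ->; rewrite /= v_pmap // ?e_bar //; case: ifP => bt; last exact: mem0v.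
  have [j ej] := e_surj bt; apply/memv_span/mapP; exists j; last by rewrite ej.
  by rewrite mem_filter mem_enum andbT ej e_bar.
- rewrite mem_filter => /andP [bs _] ->; have [j ej] := e_surj bs.
  apply/memv_span/mapP; exists j; first by rewrite mem_enum.
  by rewrite /= v_pmap ?e_bar // ej e_bar.
Qed.

Lemma img_rank_basis s t : (s <= t)%O ->
  img_rank F s t = #|[set i : 'I_(N t) | bar (e t i) s]|.
Proof. by move=> st; rewrite /img_rank img_pmap_span // dim_span_basis_sub. Qed.

End Basis.

Lemma barcode_of_image_rank : barcode_of_image F B ->
  exists (N : T -> nat) (e : forall t, 'I_(N t) -> rep B),
  [/\ forall t, injective (e t), forall t i, bar (e t i) t,
      forall t b, bar b t -> exists i, e t i = b &
      forall s t, (s <= t)%O -> img_rank F s t = #|[set i : 'I_(N t) | bar (e t i) s]|].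
Proof.
case=> v [enum_B v_pmap].
have /choice [ne ne_spec] : forall t, exists ne : {n : nat & 'I_n -> rep B},
    [/\ injective (tagged ne), forall i, bar (tagged ne i) t,
        forall b, bar b t -> exists i, tagged ne i = b &
        basis_of (limg (F t)) [seq v (tagged ne i) t | i <- enum 'I_(tag ne)]].
  by move=> t; have [n [e e_spec]] := enum_B t; exists (Tagged (fun n => 'I_n -> rep B) e).
pose N t := tag (ne t); pose e t : 'I_(N t) -> rep B := tagged (ne t).
have e_inj t : injective (e t) by case: (ne_spec t).
have e_bar t i : bar (e t i) t by case: (ne_spec t) => _ /(_ i).
have e_surj t b : bar b t -> exists i, e t i = b by case: (ne_spec t) => _ _ /(_ b).
have e_basis t : basis_of (limg (F t)) [seq v (e t i) t | i <- enum 'I_(N t)].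
  by case: (ne_spec t).
exists N, e; split; [exact: e_inj | exact: e_bar | exact: e_surj | move=> s t st].
exact: (img_rank_basis e_surj e_bar e_basis v_pmap st).
Qed.

End BarcodeRank.

Lemma card_rel_inj (X Y : finType) (A : {set X}) (B : {set Y}) (R : X -> Y -> Prop) :
  (forall x, x \in A -> exists2 y, y \in B & R x y) ->
  (forall x x' y, x \in A -> x' \in A -> R x y -> R x' y -> x = x') ->
  #|A| <= #|B|.
Proof.
move=> RAB R_inj; have [-> | [x0 x0A]] := set_0Vmem A; first by rewrite cards0.
have [y0 _ _] := RAB x0 x0A.
have /choice [f fP] : forall x, exists y, x \in A -> y \in B /\ R x y.
  move=> x; case: (boolP (x \in A)) => [/RAB [y yB Rxy] | _]; last by exists y0.
  by exists y.
rewrite -(card_in_imset (f := f)); last first.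
  by move=> x x' xA x'A fx; apply: R_inj (fP x xA).2 _ => //; rewrite fx; exact: (fP x' x'A).2.
by apply/subset_leq_card/subsetP => _ /imsetP [x xA ->]; case: (fP x xA).
Qed.

Section ChainRestriction.
Variables (d : Order.disp_t) (T : orderType d) (B : barcode T).
Variables (N : T -> nat) (e : forall t, 'I_(N t) -> rep B).
Arguments e : clear implicits.
Hypothesis e_inj : forall t, injective (e t).
Hypothesis e_bar : forall t i, bar (e t i) t.
Hypothesis e_surj : forall t b, bar b t -> exists i, e t i = b.
Variables (n : nat) (p : nat -> T).
Hypothesis p_mono : forall i j, i <= j -> j < n -> (p i <= p j)%O.

Definition chain_bar := {k : 'I_n & 'I_(N (p k))}.
Definition cbar (x : chain_bar) : rep B := e (p (tag x)) (tagged x).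
Definition cstart (x : chain_bar) : nat := tag x.
Definition cend (x : chain_bar) : nat := \max_(j : 'I_n | bar (cbar x) (p j)) j.
(* A bar alive on the chain is represented once, by its index at the first
   chain point where it is alive. *)
Definition chain_bars : {set chain_bar} :=
  [set x | [forall k : 'I_n, (k < cstart x) ==> ~~ bar (cbar x) (p k)]].

Lemma bar_chain_convex (b : rep B) i k j : i <= k <= j -> j < n ->
  bar b (p i) -> bar b (p j) -> bar b (p k).
Proof.
move=> /andP [ik kj] jn; apply: (bar_interval b).2; apply: p_mono => //.
exact: leq_ltn_trans kj jn.
Qed.

Lemma cend_bar x : bar (cbar x) (p (cend x)) /\ cstart x <= cend x < n.
Proof.
have alive : bar (cbar x) (p (tag x)) by exact: e_bar.
have start_le : cstart x <= cend x :=
  @leq_bigmax_cond _ (fun j : 'I_n => bar (cbar x) (p j)) (fun j : 'I_n => nat_of_ord j) _ alive.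
have some_alive : 0 < #|[pred j : 'I_n | bar (cbar x) (p j)]|.
  by apply/card_gt0P; exists (tag x).
have [j jP jmax] := eq_bigmax_cond (fun j : 'I_n => nat_of_ord j) some_alive.
have end_j : cend x = j by exact: jmax.
by rewrite start_le end_j ltn_ord; move: jP; rewrite inE.
Qed.

Lemma cbarE x k : x \in chain_bars -> k < n ->
  bar (cbar x) (p k) = (cstart x <= k <= cend x).
Proof.
move=> xS kn; have [end_bar /andP [se en]] := cend_bar x; apply/idP/idP => [alive|].
  rewrite (@leq_bigmax_cond _ (fun j : 'I_n => bar (cbar x) (p j))
                            (fun j : 'I_n => nat_of_ord j) (Ordinal kn)) // andbT.
  rewrite leqNgt; apply: contraTN alive => ks.
  by move: xS; rewrite inE => /forallP /(_ (Ordinal kn)); rewrite ks.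
by move=> sk_ke; apply: (bar_chain_convex sk_ke en) end_bar; apply: e_bar.
Qed.

Lemma cbar_inj : {in chain_bars &, injective cbar}.
Proof.
move=> x y xS yS exy.
have /andP [syx _] : cstart y <= cstart x <= cend y.
  by rewrite -cbarE ?ltn_ord // -exy; apply: e_bar.
have /andP [sxy _] : cstart x <= cstart y <= cend x.
  by rewrite -cbarE ?ltn_ord // exy; apply: e_bar.
case: x y {xS yS} exy syx sxy => [k i] [k' i']; rewrite /cbar /cstart /= => eki sk sk'.
have ekk : k = k' by apply: val_inj; apply/eqP; rewrite eqn_leq sk sk'.
by subst k'; rewrite (e_inj eki).
Qed.

Lemma cbar_surj b k : k < n -> bar b (p k) -> exists2 x, x \in chain_bars & cbar x = b.
Proof.
move=> kn alive; have [k0 alive0 k0_min] :=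
  @arg_minnP _ (Ordinal kn) (fun j : 'I_n => bar b (p j)) (fun j => nat_of_ord j) alive.
have [i ei] := e_surj alive0.
exists (Tagged (fun k : 'I_n => 'I_(N (p k))) i); last by rewrite /cbar /= ei.
rewrite inE; apply/forallP => k'; apply/implyP => lt; apply: contraTN lt => alive'.
by rewrite -leqNgt /cstart /=; apply: k0_min; move: alive'; rewrite /cbar /= ei.
Qed.

Lemma card_bars_at k (Q : pred (rep B)) : k < n -> (forall b, Q b -> bar b (p k)) ->
  #|[set i : 'I_(N (p k)) | Q (e (p k) i)]| = #|[set x in chain_bars | Q (cbar x)]|.
Proof.
move=> kn Q_alive; apply/eqP; rewrite eqn_leq; apply/andP; split.
  apply: (@card_rel_inj _ _ _ _ (fun i x => e (p k) i = cbar x)).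
    move=> i; rewrite inE => Qi; have [x xS ex] := cbar_surj kn (e_bar i).
    by exists x; [rewrite inE xS ex | rewrite ex].
  by move=> i i' x _ _ ei ei'; apply: (@e_inj (p k)); rewrite ei ei'.
apply: (@card_rel_inj _ _ _ _ (fun x i => e (p k) i = cbar x)).
  move=> x; rewrite inE => /andP [xS Qx]; have [i ei] := e_surj (Q_alive _ Qx).
  by exists i; rewrite // inE ei.
by move=> x x' i /setIdP [xS _] /setIdP [x'S _] ->; apply: cbar_inj.
Qed.

Lemma chain_rank_count i j : i <= j -> j < n ->
  rank_count chain_bars cstart cend i.+1 j =
  #|[set l : 'I_(N (p j)) | bar (e (p j) l) (p i)]|.
Proof.
move=> ij jn; have jalive : forall b : rep B, bar b (p i) && bar b (p j) -> bar b (p j).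
  by move=> b /andP [].
have -> : [set l : 'I_(N (p j)) | bar (e (p j) l) (p i)] =
          [set l | bar (e (p j) l) (p i) && bar (e (p j) l) (p j)].
  by apply/setP => l; rewrite !inE e_bar andbT.
rewrite (card_bars_at jn jalive); apply: eq_card => x.
have [_ /andP [se en]] := cend_bar x.
by apply/setIdP/setIdP => -[xS alive]; split=> //; move: alive;
  rewrite /= !cbarE ?(leq_ltn_trans ij jn) //; lia.
Qed.

End ChainRestriction.

Arguments cstart {d T N n p}.
Arguments cend {d T B N} e {n p}.

Lemma In_memP (X : eqType) (x : X) (s : seq X) : reflect (List.In x s) (x \in s).
Proof.
elim: s => [|y s IH]; first by constructor.
rewrite inE; apply: (iffP orP) => -[xy | xs]; [left | right; exact/IH | left | right; exact/IH].
  by rewrite (eqP xy).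
by rewrite xy.
Qed.

Section CompactnessChoice.
Import finmap classical_sets cardinality topology ArrowAsProduct.
Local Open Scope classical_set_scope.

Lemma compact_closed_finI (X : topologicalType) (A : set X) (K : choiceType)
    (g : K -> set X) (k0 : K) :
  compact A -> (forall k, closed (g k)) -> finI [set: K] (fun k => A `&` g k) ->
  exists2 f, A f & forall k, g k f.
Proof.
move=> A_compact g_closed g_finI.
have [|f [Af f_cl]] := A_compact _ (finI_filter g_finI).
  by exists (A `&` g k0); first exact: finI_from1.
exists f => // k; apply: g_closed => B /f_cl; apply.
by exists (A `&` g k); [exact: finI_from1 | move=> x []].
Qed.

Variables (I : Type) (N : I -> nat).
Variables (P1 : I -> nat -> Prop) (P2 : I -> I -> nat -> nat -> Prop).
Let J := {classic I}.
Let choice_space := forall i : J, nat.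

Lemma closed_determined_by (S : set choice_space) (a b : J) :
  (forall f g : choice_space, f a = g a -> f b = g b -> S f -> S g) -> closed S.
Proof.
move=> S_ab; rewrite -[S]setCK; apply: open_closedC; rewrite openE => f nSf; rewrite /interior.
have near_a : nbhs f ((fun h : choice_space => h a) @^-1` [set f a]).
  exact: (@proj_continuous J (fun=> nat) a f _ (discrete_set1 (f a))).
have near_b : nbhs f ((fun h : choice_space => h b) @^-1` [set f b]).
  exact: (@proj_continuous J (fun=> nat) b f _ (discrete_set1 (f b))).
apply: filterS (filterI near_a near_b) => g [/= ga gb] Sg.
by apply: nSf; apply: (S_ab g f ga gb Sg).
Qed.

(* Rado's selection principle. *)
Lemma compactness_choice :
  (forall s : seq I, exists c : I -> nat,
     (forall i, List.In i s -> c i < N i /\ P1 i (c i)) /\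
     (forall i j, List.In i s -> List.In j s -> P2 i j (c i) (c j))) ->
  exists c : I -> nat, (forall i, c i < N i /\ P1 i (c i)) /\ forall i j, P2 i j (c i) (c j).
Proof.
move=> fin_choice.
have N_gt0 i : 0 < N i.
  have [c [c_ok _]] := fin_choice [:: i].
  exact: leq_ltn_trans (leq0n _) (c_ok i (or_introl erefl)).1.
pose bounded : set choice_space := [set f | forall i, f i < N i].
have bounded_compact : compact bounded.
  apply: (@tychonoff J (fun=> nat) (fun i => [set k | k < N i])) => i.
  by apply/finite_compact/(@sub_finite_set _ _ `I_(N i)) => // k; rewrite /= inE.
pose K := (J + J * J)%type.
pose constraint (k : K) : set choice_space := match k with
  | inl i => [set f | P1 i (f i)]
  | inr ij => [set f | P2 ij.1 ij.2 (f ij.1) (f ij.2)] end.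
have constraint_closed k : closed (constraint k).
  case: k => [i|[i j]]; first by apply: (@closed_determined_by _ i i) => f g /= ->.
  by apply: (@closed_determined_by _ i j) => f g /= -> ->.
have constraint_finI : finI [set: K] (fun k => bounded `&` constraint k).
  move=> D _; pose idx (k : K) : seq I := if k is inr ij then [:: ij.1; ij.2] else
                                         if k is inl i then [:: i] else [::].
  pose s := List.flat_map idx (enum_fset D).
  have in_s k i : k \in D -> List.In i (idx k) -> List.In i s.
    by move=> kD ik; apply/List.in_flat_map; exists k; split=> //; apply/In_memP.
  have [c [c1 c2]] := fin_choice s.
  pose c' : choice_space := fun i => if `[< List.In (i : I) s >] then c i else 0.
  have c'E i : List.In i s -> c' i = c i by rewrite /c'; case: asboolP.
  exists c' => k /= kD; split.
    by move=> i; rewrite /c'; case: asboolP => [/c1 []|_].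
  case: k kD => [i|[i j]] kD /=.
    by have iS := in_s _ i kD (or_introl erefl); rewrite c'E //; case: (c1 i iS).
  have iS := in_s _ i kD (or_introl erefl).
  have jS := in_s _ j kD (or_intror (or_introl erefl)).
  by rewrite !c'E //; apply: c2.
have [[i0 _] | I0] := pselect (exists i : I, True); last first.
  by exists (fun=> 0); split=> [i | i]; case: I0; exists i.
have [f f_bd f_ok] :=
  compact_closed_finI (inl i0 : K) bounded_compact constraint_closed constraint_finI.
exists f; split=> [i | i j]; last exact: (f_ok (inr (i, j))).
by split; [exact: f_bd | exact: (f_ok (inl i))].
Qed.

End CompactnessChoice.

Section BarPoints.
Variables (d : Order.disp_t) (T : orderType d).

Lemma chain_through (X : seq T) (t0 : T) : exists n (p : nat -> T),
  (forall i j, i <= j -> j < n -> (p i <= p j)%O) /\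
  forall t, t \in X -> exists2 k, k < n & p k = t.
Proof.
exists (size (sort <=%O X)), (nth t0 (sort <=%O X)); split.
  move=> i j ij jn; apply: (sorted_leq_nth le_trans le_refl) => //.
  by rewrite inE (leq_ltn_trans ij jn).
move=> t tX; have tS : t \in sort <=%O X by rewrite mem_sort.
by exists (index t (sort <=%O X)); rewrite ?index_mem ?nth_index.
Qed.

Definition bar_point (B : barcode T) (b : rep B) : T := projT1 (cid (bar_interval b).1).

Lemma bar_point_bar (B : barcode T) (b : rep B) : bar b (bar_point b).
Proof. exact: projT2 (cid (bar_interval b).1). Qed.

Definition outside_point (A B : barcode T) (a : rep A) (b : rep B) : T :=
  if pselect (exists t, bar a t && ~~ bar b t) is left ex then projT1 (cid ex)
  else bar_point a.

Lemma outside_point_sub (A B : barcode T) (a : rep A) (b : rep B) :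
  (bar a (outside_point a b) -> bar b (outside_point a b)) -> forall t, bar a t -> bar b t.
Proof.
rewrite /outside_point; case: pselect => [ex | no_ex] sub t a_t; last first.
  by apply: contrapT => bt; apply: no_ex; exists t; rewrite a_t; apply/negP.
by case: (cid ex) sub => u /= /andP [au nbu] /(_ au); rewrite (negbTE nbu).
Qed.

End BarPoints.

Section Factorization.
Variables (K : fieldType) (d : Order.disp_t) (T : orderType d).
Variables (U V T' W : pmod K T) (F : pmhom U V) (G : pmhom T' W).
Variables (phi1 : pmhom T' U) (phi2 : pmhom V W).
Hypothesis G_factor : forall t x, G t x = phi2 t (F t (phi1 t x)).
Variables (BG BF : barcode T) (NG NF : T -> nat).
Variables (eG : forall t, 'I_(NG t) -> rep BG) (eF : forall t, 'I_(NF t) -> rep BF).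
Arguments eG : clear implicits.
Arguments eF : clear implicits.
Hypothesis eG_inj : forall t, injective (eG t).
Hypothesis eG_bar : forall t i, bar (eG t i) t.
Hypothesis eG_surj : forall t b, bar b t -> exists i, eG t i = b.
Hypothesis eG_rank : forall s t, (s <= t)%O ->
  img_rank G s t = #|[set i : 'I_(NG t) | bar (eG t i) s]|.
Hypothesis eF_inj : forall t, injective (eF t).
Hypothesis eF_bar : forall t i, bar (eF t i) t.
Hypothesis eF_surj : forall t b, bar b t -> exists i, eF t i = b.
Hypothesis eF_rank : forall s t, (s <= t)%O ->
  img_rank F s t = #|[set i : 'I_(NF t) | bar (eF t i) s]|.

Section Chain.
Variables (n : nat) (p : nat -> T).
Hypothesis p_mono : forall i j, i <= j -> j < n -> (p i <= p j)%O.

Let Fphi := pmhom_comp F phi1.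
(* [R i.+1 j] is the rank of im (F \o phi1) from p_i to p_j, shifted like
   [rank_count]. *)
Let R i j := if (0 < i) && (j < n) then img_rank Fphi (p i.-1) (p j) else 0.
Let SG := chain_bars eG n p.
Let SF := chain_bars eF n p.
Let sG : chain_bar NG n p -> nat := cstart.
Let sF : chain_bar NF n p -> nat := cstart.
Let endG : chain_bar NG n p -> nat := cend eG.
Let endF : chain_bar NF n p -> nat := cend eF.

Let p_le i j : i <= j < n -> (p i <= p j)%O.
Proof. by case/andP => ij jn; apply: p_mono. Qed.

Let chain_rank_G i j : i <= j < n -> rank_count SG sG endG i.+1 j = img_rank G (p i) (p j).
Proof.
case/andP => ij jn; rewrite chain_rank_count // eG_rank //; exact: p_mono.
Qed.

Let chain_rank_F i j : i <= j < n -> rank_count SF sF endF i.+1 j = img_rank F (p i) (p j).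
Proof.
case/andP => ij jn; rewrite chain_rank_count // eF_rank //; exact: p_mono.
Qed.

Let R_moebius i j : i <= j < n -> R i j + R i.+1 j.+1 <= R i.+1 j + R i j.+1.
Proof.
case/andP => ij jn; rewrite /R jn /=.
case: (ltnP j.+1 n) => [j1n | nj1]; rewrite ?andbT ?andbF ?addn0.
  case: i ij => [|i] ij /=; first by rewrite add0n addn0 img_rank_leq_end ?p_le //; lia.
  by rewrite img_rank_moebius ?p_le //; lia.
by case: i ij => [|i] ij //=; rewrite img_rank_leq_start ?p_le //; lia.
Qed.

Let quotient_rank i j : i <= j < n ->
  rank_count SG sG endG i.+1 j + R i j <= R i.+1 j + rank_count SG sG endG i j.
Proof.
move=> ijn; have G_Fphi t x : G t x = phi2 t (Fphi t x) by rewrite G_factor /= comp_lfunE.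
case/andP: (ijn) => ij jn; rewrite /R jn chain_rank_G //=.
case: i ij ijn => [|i] ij ijn; rewrite ?rank_count0 ?addn0.
  by rewrite (img_rank_quotient_leq G_Fphi) ?p_le.
by rewrite chain_rank_G /= ?(img_rank_quotient G_Fphi) ?p_le //; lia.
Qed.

Let sub_rank i j : i <= j < n ->
  R i.+1 j + rank_count SF sF endF i.+1 j.+1 <= rank_count SF sF endF i.+1 j + R i.+1 j.+1.
Proof.
case/andP => ij jn; rewrite /R jn /= (chain_rank_F (i := i) (j := j)) ?ij //.
case: (ltnP j.+1 n) => [j1n | nj1].
  rewrite (chain_rank_F (i := i) (j := j.+1)) ?(leqW ij) //.
  by apply: img_rank_comp; apply: p_le; lia.
have -> : j.+1 = n by lia.
rewrite rank_count_out ?addn0 ?img_rank_comp_leq // => y _.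
by case: (cend_bar eF_bar y) => _ /andP [].
Qed.

Lemma chain_matching : exists h : chain_bar NG n p -> option (chain_bar NF n p),
  {in SG &, injective h} /\ forall x, x \in SG -> exists2 y, h x = Some y &
    y \in SF /\ forall k, k < n -> bar (cbar eG x) (p k) -> bar (cbar eF y) (p k).
Proof.
have [|||||||h [h_inj h_match]] := @rank_matching n _ _ SG SF sG endG sF endF R.
- by move=> x _; case: (cend_bar eG_bar x).
- by move=> y _; case: (cend_bar eF_bar y).
- by [].
- by move=> i; rewrite /R ltnn andbF.
- exact: R_moebius.
- exact: quotient_rank.
- exact: sub_rank.
exists h; split=> // x xS; have [y hy [yS sy ey]] := h_match x xS.
exists y => //; split=> // k kn; rewrite !cbarE //; move: sy ey; rewrite /sG /sF /endG /endF; lia.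
Qed.

Lemma chain_subbarcode : exists M : rep BG -> rep BF -> Prop,
  [/\ forall a k, k < n -> bar a (p k) -> exists b, M a b,
      forall a b, M a b -> forall k, k < n -> bar a (p k) -> bar b (p k) &
      forall a a' b, M a b -> M a' b -> a = a'].
Proof.
have [h [h_inj h_match]] := chain_matching.
exists (fun a b => exists2 x, x \in SG /\ cbar eG x = a &
                   exists2 y, h x = Some y & cbar eF y = b); split.
- move=> a k kn alive; have [x xS xa] := cbar_surj eG_surj kn alive.
  by have [y hy _] := h_match x xS; exists (cbar eF y), x => //; exists y.
- move=> a b [x [xS <-] [y hy <-]]; have [y' hy' [_ sub]] := h_match x xS.
  by move: hy'; rewrite hy => -[->].
move=> a a' b [x [xS <-] [y hy <-]] [x' [x'S <-] [y' hy' yy']].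
have [y1 hy1 [yS _]] := h_match x xS; have [y1' hy1' [y'S _]] := h_match x' x'S.
move: hy1 hy1'; rewrite hy hy' => -[yy1] -[yy1']; subst y1 y1'.
congr (cbar eG _); apply: h_inj; rewrite // hy hy'; congr Some.
exact: (cbar_inj eF_inj eF_bar p_mono yS y'S (esym yy')).
Qed.

End Chain.

(* A bar of B_F assigned to [a] is coded by its index among the bars alive at
   [bar_point a], so that [compactness_choice] applies. *)
Definition candidate (a : rep BG) (k : nat) : option (rep BF) :=
  omap (eF (bar_point a)) (insub k).

Definition candidate_covers (a : rep BG) k :=
  exists2 b, candidate a k = Some b & forall t, bar a t -> bar b t.

Definition candidate_unique a a' k k' :=
  forall b, candidate a k = Some b -> candidate a' k' = Some b -> a = a'.

Lemma candidate_Some a k b : candidate a k = Some b ->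
  exists2 l : 'I_(NF (bar_point a)), val l = k & eF (bar_point a) l = b.
Proof. by rewrite /candidate; case: insubP => // l _ <- [<-]; exists l. Qed.

Lemma finite_subbarcode (s : seq (rep BG)) : exists c : rep BG -> nat,
  (forall a, List.In a s -> c a < NF (bar_point a) /\ candidate_covers a (c a)) /\
  (forall a a', List.In a s -> List.In a' s -> candidate_unique a a' (c a) (c a')).
Proof.
case: s => [|a0 s0]; first by exists (fun=> 0); split.
set s := a0 :: s0.
(* A bar of B_F alive at [bar_point a] but not containing [a] misses [a] at one
   of these points. *)
pose test_points (a : rep BG) := bar_point a ::
  [seq outside_point a (eF (bar_point a) l) | l <- enum 'I_(NF (bar_point a))].
have [n [p [p_mono on_chain]]] := chain_through (List.flat_map test_points s) (bar_point a0).
have on_chain_at a t : List.In a s -> t \in test_points a -> exists2 k, k < n & p k = t.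
  by move=> as_ ta; apply/on_chain/In_memP/List.in_flat_map; exists a; split=> //; apply/In_memP.
have [M [M_total M_sub M_inj]] := chain_subbarcode p_mono.
have /choice [c c_spec] : forall a, exists l, List.In a s ->
    exists2 b, candidate a l = Some b & M a b.
  move=> a; case: (pselect (List.In a s)) => [as_ | not_in]; last by exists 0 => /not_in.
  have [k kn pk] := on_chain_at a _ as_ (mem_head _ _).
  have [|b Mab] := M_total a k kn; first by rewrite pk bar_point_bar.
  have [|l el] := eF_surj (t := bar_point a) (b := b).
    by rewrite -pk (M_sub a) // pk bar_point_bar.
  by exists l => _; exists b; rewrite // /candidate valK /= el.
exists c; split=> [a as_ | a a' as_ a's b ca ca'].
  have [b cb Mab] := c_spec a as_; have [l lc el] := candidate_Some cb.
  split; first by rewrite -lc ltn_ord.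
  exists b => //; apply: outside_point_sub => out_a.
  have [|k kn pk] := on_chain_at a (outside_point a b) as_.
    by rewrite inE -el; apply/orP; right; apply/mapP; exists l; rewrite ?mem_enum.
  by rewrite -pk in out_a *; apply: M_sub out_a.
have [b1 cb1 Mab1] := c_spec a as_; have [b2 cb2 Mab2] := c_spec a' a's.
move: cb1 cb2; rewrite ca ca' => -[eb1] [eb2]; subst b1 b2.
exact: M_inj Mab1 Mab2.
Qed.

Lemma subbarcode_of_candidates (c : rep BG -> nat) :
  (forall a, candidate_covers a (c a)) -> (forall a a', candidate_unique a a' (c a) (c a')) ->
  subbarcode BG BF.
Proof.
move=> c_covers c_unique; exists (fun a b => candidate a (c a) = Some b); split.
- by split=> [a b b' -> [] | a a' b]; last exact: c_unique.
- by move=> a; have [b cb _] := c_covers a; exists b.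
- by move=> a b cb; have [b' cb' sub] := c_covers a; move: cb; rewrite cb' => -[<-].
Qed.

End Factorization.

Theorem theorem3p3 (K : fieldType) (d : Order.disp_t) (T : orderType d)
    (U V T' W : pmod K T) (F : pmhom U V) (G : pmhom T' W)
    (phi1 : pmhom T' U) (phi2 : pmhom V W) :
  (forall (t : T) (x : T' t), G t x = phi2 t (F t (phi1 t x))) ->
  forall BG BF : barcode T,
    barcode_of_image G BG -> barcode_of_image F BF -> subbarcode BG BF.
Proof.
move=> G_factor BG BF /barcode_of_image_rank [NG [eG [eG_inj eG_bar eG_surj eG_rank]]]
  /barcode_of_image_rank [NF [eF [eF_inj eF_bar eF_surj eF_rank]]].
have [c [c_covers c_unique]] := compactness_choice
  (finite_subbarcode G_factor eG_inj eG_bar eG_surj eG_rank eF_inj eF_bar eF_surj eF_rank).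
apply: (subbarcode_of_candidates (c := c)) => [a | a a']; [exact: (c_covers a).2 | exact: c_unique].
Qed.
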